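(* If $R$ is a $v$-domain, then every nonzero finitely generated ideal of $R$ is $t$-basic.
   Context: For a domain $R$ with quotient field $K$: $I^{-1}=(R:I)=\{x\in K:xI\subseteq R\}$, $I_v=(I^{-1})^{-1}$, $I_t=\bigcup J_v$ over finitely generated subideals $J\subseteq I$. $R$ is a $v$-domain if every nonzero finitely generated ideal $I$ satisfies $(II^{-1})_v=R$. For a nonzero ideal $I$, an ideal $J\subseteq I$ is a $t$-reduction of $I$ if $(JI^n)_t=(I^{n+1})_t$ for some integer $n\ge0$; $I$ is $t$-basic if every $t$-reduction $J$ of $I$ satisfies $J_t=I_t$. *)

From HB Require Import structures.
From mathcomp Require Import all_boot all_order all_algebra.
From mathcomp Require Import fraction.
Set Implicit Arguments. Unset Strict Implicit. Unset Printing Implicit Defensive.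
Import GRing.Theory.
Local Open Scope ring_scope.

Section StarOps.
Variable R : idomainType.
Local Notation K := {fraction R}.
Local Notation emb := (@FracField.tofrac R).

Definition kset := K -> Prop.

Definition Rset : kset := fun x => exists r : R, x = emb r.

Definition subset (A B : kset) : Prop := forall x, A x -> B x.
Definition set_eq (A B : kset) : Prop := forall x, A x <-> B x.

Definition is_ideal (I : kset) : Prop :=
  [/\ subset I Rset, I 0,
      (forall x y, I x -> I y -> I (x + y)) &
      (forall r x, I x -> I (emb r * x))].

Definition nonzero (I : kset) : Prop := exists x, I x /\ x <> 0.

Definition span (s : seq K) : kset :=
  fun x => exists c : nat -> R, x = \sum_(i < size s) emb (c i) * s`_i.

Definition fin_gen (I : kset) : Prop := exists s : seq K, set_eq I (span s).

Definition prod_set (A B : kset) : kset :=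
  fun x => exists (n : nat) (a b : nat -> K),
    (forall i, (i < n)%N -> A (a i) /\ B (b i)) /\
    x = \sum_(i < n) a i * b i.

Fixpoint pow_set (A : kset) (n : nat) : kset :=
  match n with
  | 0%N => Rset
  | n'.+1 => prod_set (pow_set A n') A
  end.

Definition colon (A B : kset) : kset :=
  fun x => forall b, B b -> A (x * b).

Definition inv_set (I : kset) : kset := colon Rset I.

Definition v_op (I : kset) : kset := inv_set (inv_set I).

Definition t_op (I : kset) : kset :=
  fun x => exists s : seq K, subset (span s) I /\ v_op (span s) x.

Definition v_domain : Prop :=
  forall I : kset, is_ideal I -> nonzero I -> fin_gen I ->
    set_eq (v_op (prod_set I (inv_set I))) Rset.

Definition t_reduction (J I : kset) : Prop :=
  is_ideal J /\ subset J I /\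
  exists n : nat, set_eq (t_op (prod_set J (pow_set I n))) (t_op (pow_set I n.+1)).

Definition t_basic (I : kset) : Prop :=
  forall J : kset, t_reduction J I -> set_eq (t_op J) (t_op I).

End StarOps.

(* In a v-domain (I I^{-1})^{-1} = R, and iterating this
   gives the cancellation law: if every product of n+1 generators of I lies in
   (A I^n)_v, then I is contained in A_v.  Given a t-reduction J of I, each of
   the finitely many products of n+1 generators lies in (J I^n)_t, hence in
   (S I^n)_v for one finite S contained in J; cancelling I^n gives
   I_t contained in (S)_v, which lies in J_t. *)
From Pilot Require Import Defs.
From mathcomp Require Import all_boot all_order all_algebra.
From mathcomp Require Import fraction ring.
Set Implicit Arguments. Unset Strict Implicit. Unset Printing Implicit Defensive.
Import GRing.Theory.
Local Open Scope ring_scope.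

Section TOperations.
Variable R : idomainType.
Local Notation K := {fraction R}.
Local Notation emb := (@FracField.tofrac R).
Local Notation kset := (kset R).
Local Notation Rset := (@Rset R).
Local Notation span := (@Pilot.Defs.span R).
Local Notation subset := (@Pilot.Defs.subset R).

Definition seqset (s : seq K) : kset := fun x => x \in s.

Fixpoint monomials (s : seq K) (n : nat) : seq K :=
  if n is n'.+1 then [seq q * a | q <- monomials s n', a <- s] else [:: 1].

Lemma Rset0 : Rset 0. Proof. by exists 0; rewrite rmorph0. Qed.

Lemma Rset1 : Rset 1. Proof. by exists 1; rewrite rmorph1. Qed.

Lemma RsetD x y : Rset x -> Rset y -> Rset (x + y).
Proof. by move=> [a ->] [b ->]; exists (a + b); rewrite rmorphD. Qed.

Lemma RsetM x y : Rset x -> Rset y -> Rset (x * y).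
Proof. by move=> [a ->] [b ->]; exists (a * b); rewrite rmorphM. Qed.

Lemma Rset_emb r : Rset (emb r). Proof. by exists r. Qed.

Lemma Rset_sum n (F : 'I_n -> K) : (forall i, Rset (F i)) -> Rset (\sum_(i < n) F i).
Proof. by move=> RF; apply: (big_ind Rset) => //; [exact: Rset0 | exact: RsetD]. Qed.

Lemma mem_span (s : seq K) a : a \in s -> span s a.
Proof.
move=> sa; have lt_as : (index a s < size s)%N by rewrite index_mem.
exists (fun j => if j == index a s then 1 else 0).
rewrite (bigD1 (Ordinal lt_as)) //= eqxx rmorph1 mul1r nth_index // big1 ?addr0 //.
by move=> j neq_j; rewrite ifN ?rmorph0 ?mul0r //.
Qed.

Lemma ideal_span (J : kset) (s : seq K) :
  is_ideal J -> subset (seqset s) J -> subset (span s) J.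
Proof.
move=> [_ J0 JD JM] sJ x [c ->]; apply: (big_ind J) => // i _.
by apply: JM; apply: sJ; apply: mem_nth.
Qed.

Lemma Rset_mul_span (s : seq K) z x :
  (forall a, a \in s -> Rset (z * a)) -> span s x -> Rset (z * x).
Proof.
move=> Rzs [c ->]; rewrite mulr_sumr; apply: Rset_sum => i.
by rewrite mulrCA; apply: RsetM (Rset_emb _) (Rzs _ (mem_nth _ _)).
Qed.

Lemma inv_set_span (s : seq K) : subset (inv_set (seqset s)) (inv_set (span s)).
Proof. by move=> z Rzs x; apply: Rset_mul_span. Qed.

Lemma span_sub_inv_set (A : kset) (s : seq K) :
  subset (seqset s) (inv_set A) -> subset (span s) (inv_set A).
Proof.
move=> sA x sx b Ab; rewrite mulrC; apply: Rset_mul_span sx => a sa.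
by rewrite mulrC; apply: sA.
Qed.

Lemma inv_set_anti (A B : kset) : subset A B -> subset (inv_set B) (inv_set A).
Proof. by move=> sAB x Bx b Ab; apply: Bx; apply: sAB. Qed.

Lemma v_op_ext (A : kset) : subset A (v_op A).
Proof. by move=> a Aa w Aw; rewrite mulrC; apply: Aw. Qed.

Lemma v_op_mono (A B : kset) : subset A B -> subset (v_op A) (v_op B).
Proof. by move=> sAB; apply/inv_set_anti/inv_set_anti. Qed.

Lemma v_op_idem (A : kset) : subset (v_op (v_op A)) (v_op A).
Proof. exact/inv_set_anti/v_op_ext. Qed.

Lemma t_op_mono (A B : kset) : subset A B -> subset (t_op A) (t_op B).
Proof. by move=> sAB x [s [sA vx]]; exists s; split=> // y /sA/sAB. Qed.

Lemma t_op_ext (A : kset) g :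
  (forall r x, A x -> A (emb r * x)) -> A g -> t_op A g.
Proof.
move=> AZ Ag; exists [:: g]; split; last exact/v_op_ext/mem_span/mem_head.
by move=> x [c ->]; rewrite big_ord1; apply: AZ.
Qed.

Lemma prod_set_mul (A B : kset) a b : A a -> B b -> prod_set A B (a * b).
Proof.
move=> Aa Bb; exists 1%N, (fun=> a), (fun=> b).
by split; [move=> i _; split | rewrite big_ord1].
Qed.

Lemma prod_set_mono (A A' B : kset) :
  subset A A' -> subset (prod_set A B) (prod_set A' B).
Proof.
move=> sAA' x [n [a [b [Aab ->]]]]; exists n, a, b; split=> // i lt_in.
by have [Aa Bb] := Aab i lt_in; split=> //; apply: sAA'.
Qed.

Lemma prod_set_scale (A B : kset) r x :
  (forall r b, B b -> B (emb r * b)) -> prod_set A B x -> prod_set A B (emb r * x).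
Proof.
move=> BZ [n [a [b [Aab ->]]]]; exists n, a, (fun i => emb r * b i); split.
  by move=> i lt_in; have [Aa Bb] := Aab i lt_in; split=> //; apply: BZ.
by rewrite mulr_sumr; apply: eq_bigr => i _; rewrite mulrCA.
Qed.

Lemma inv_prod_set (A B : kset) z :
  (forall a b, A a -> B b -> Rset (z * (a * b))) -> inv_set (prod_set A B) z.
Proof.
move=> RzAB x [n [a [b [Aab ->]]]]; rewrite mulr_sumr; apply: Rset_sum => i.
by have [Aa Bb] := Aab i (ltn_ord i); apply: RzAB.
Qed.

Lemma inv_set_prod (A B : kset) y w :
  inv_set A y -> inv_set B w -> inv_set (prod_set A B) (y * w).
Proof.
move=> Ay Bw; apply: inv_prod_set => a b Aa Bb.
by rewrite mulrACA; apply: RsetM; [apply: Ay | apply: Bw].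
Qed.

Lemma prod_set_finite (J B : kset) x : prod_set J B x ->
  exists S, subset (seqset S) J /\ prod_set (seqset S) B x.
Proof.
move=> [m [a [b [Jab ->]]]]; exists (mkseq a m); split.
  by move=> y /mapP[i]; rewrite mem_iota add0n => /andP[_ lt_im] ->; case: (Jab i lt_im).
exists m, a, b; split=> // i lt_im; split; last by case: (Jab i lt_im).
by rewrite /seqset -(nth_mkseq 0 a lt_im) mem_nth // size_mkseq.
Qed.

Lemma finite_witness_union (J : kset) (P : seq K -> K -> Prop) (L : seq K) :
  (forall S S' g, {subset S <= S'} -> P S g -> P S' g) ->
  (forall g, g \in L -> exists S, subset (seqset S) J /\ P S g) ->
  exists S, subset (seqset S) J /\ (forall g, g \in L -> P S g).
Proof.
move=> P_mono; elim: L => [|g L IHL] PL; first by exists [::].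
have [S1 [S1J PS1]] := PL g (mem_head _ _).
have [|S2 [S2J PS2]] := IHL; first by move=> g' Lg'; apply: PL; rewrite inE Lg' orbT.
exists (S1 ++ S2); split.
  by move=> x; rewrite /seqset mem_cat => /orP[/S1J | /S2J].
move=> g'; rewrite inE => /orP[/eqP -> | Lg'].
  by apply: P_mono PS1 => x xS1; rewrite mem_cat xS1.
by apply: P_mono (PS2 _ Lg') => x xS2; rewrite mem_cat xS2 orbT.
Qed.

Lemma t_op_prod_finite (J B : kset) g : t_op (prod_set J B) g ->
  exists S, subset (seqset S) J /\ v_op (prod_set (seqset S) B) g.
Proof.
move=> [sg [sgJB vg]].
have [S [SJ sgSB]] : exists S, subset (seqset S) J /\
    (forall e, e \in sg -> prod_set (seqset S) B e).
  apply: finite_witness_union => [S S' e sSS' | e sge]; last first.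
    by apply: prod_set_finite; apply/sgJB/mem_span.
  by apply: prod_set_mono => x /sSS'.
exists S; split=> //; apply/v_op_idem/(v_op_mono _ vg).
by apply: span_sub_inv_set => e /sgSB/v_op_ext.
Qed.

Lemma monomials_pow (A : kset) (s : seq K) n q :
  subset (seqset s) A -> q \in monomials s n -> pow_set A n q.
Proof.
move=> sA; elim: n q => [|n IHn] q /=; first by rewrite inE => /eqP ->; exact: Rset1.
by case/allpairsP=> [[q' a] [/= mq' sa ->]]; apply: prod_set_mul (IHn _ mq') (sA _ sa).
Qed.

Lemma monomials_t_op (I : kset) (s : seq K) n g : is_ideal I ->
  subset (seqset s) I -> g \in monomials s n -> t_op (pow_set I n) g.
Proof.
case: n => [|n] [_ _ _ IZ] sI mg; apply: t_op_ext (monomials_pow sI mg) => r x.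
  exact: RsetM (Rset_emb r).
exact: prod_set_scale.
Qed.

Section VDomain.
Hypothesis vR : v_domain R.
Variables (I : kset) (s0 : seq K).
Hypotheses (I_ideal : is_ideal I) (I_nz : nonzero I) (I_span : set_eq I (span s0)).

Lemma s0_sub_I : subset (seqset s0) I.
Proof. by move=> a /mem_span /I_span. Qed.

Lemma inv_set_gens z : inv_set (seqset s0) z -> inv_set I z.
Proof. by move=> /inv_set_span Rz x /I_span; apply: Rz. Qed.

Lemma v_domain_inv_cancel : subset (inv_set (prod_set I (inv_set I))) Rset.
Proof.
move=> z Rz; rewrite -[z]mul1r.
by apply: (proj2 (vR I_ideal I_nz (ex_intro _ s0 I_span) 1) Rset1).
Qed.

(* (I^n (I^n)^{-1})^{-1} = R, tested on the generators of I^n only *)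
Lemma inv_pow_cancel n z :
  (forall q w, q \in monomials s0 n -> inv_set (pow_set I n) w -> Rset (z * q * w)) ->
  Rset z.
Proof.
elim: n z => [|n IHn] z Rz.
  have R1_inv : inv_set (pow_set I 0) 1 by move=> b; rewrite mul1r.
  by have := Rz 1 1 (mem_head _ _) R1_inv; rewrite !mulr1.
apply: v_domain_inv_cancel; apply: inv_prod_set => a h Ia Ih.
rewrite mulrA mulrAC; apply: (inv_set_gens _ Ia) => g s0g.
apply: IHn => q w mq Iw.
rewrite (_ : z * h * g * q * w = z * (q * g) * (w * h)); last by ring.
exact: Rz (allpairs_f _ mq s0g) (inv_set_prod Iw Ih).
Qed.

Lemma v_cancel (A : kset) n :
  (forall g, g \in monomials s0 n.+1 -> v_op (prod_set A (pow_set I n)) g) ->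
  subset I (v_op A).
Proof.
move=> vAIn x Ix y Ay; apply: (inv_pow_cancel (n := n)) => q w mq Iw.
rewrite (_ : x * y * q * w = y * q * w * x); last by ring.
apply: (inv_set_gens _ Ix) => a s0a.
rewrite (_ : y * q * w * a = q * a * (y * w)); last by ring.
exact: vAIn (allpairs_f _ mq s0a) _ (inv_set_prod Ay Iw).
Qed.

End VDomain.

End TOperations.

Local Notation subset := (@Pilot.Defs.subset _).
Local Notation span := (@Pilot.Defs.span _).

Theorem corollary1p9 (R : idomainType) :
  v_domain R ->
  forall I : kset R, is_ideal I -> nonzero I -> fin_gen I -> t_basic I.
Proof.
move=> vR I I_ideal I_nz [s0 I_span] J [J_ideal [JI [n JIn_t]]] x; split.
  exact: t_op_mono JI x.
move=> [s [sI vx]].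
have [S [SJ vSIn]] : exists S, subset (seqset S) J /\
    (forall g, g \in monomials s0 n.+1 -> v_op (prod_set (seqset S) (pow_set I n)) g).
  apply: finite_witness_union => [S S' g sSS' | g mg].
    by apply: v_op_mono; apply: prod_set_mono => y /sSS'.
  apply: t_op_prod_finite; apply/JIn_t.
  exact: monomials_t_op I_ideal (s0_sub_I I_span) mg.
have IS := v_cancel vR I_ideal I_nz I_span vSIn.
exists S; split; first exact: ideal_span.
have vS_span : subset (v_op (seqset S)) (v_op (span S)).
  by apply: v_op_mono => y; apply: mem_span.
apply/vS_span/v_op_idem; apply: v_op_mono vx => y /sI; apply: IS.
Qed.
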